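(* Let $d\ge 2$. There exist constants $C>1$ and $c\in(0,1)$ depending only on $d$ such that the following holds for every finite field $\mathbb F_q$ of characteristic greater than two. Let $P=\{x\in\mathbb F_q^d: x_1^2+\cdots+x_{d-1}^2=x_d\}$ and $E,F\subset P$. If $|E||F|\ge Cq^d$, then $|\Pi(E,F)|\ge c\,q$.
   Context: $\mathbb F_q$ is a finite field with $q$ elements and characteristic greater than two. For $E,F\subset\mathbb F_q^d$, $\Pi(E,F)=\{x\cdot y: x\in E,\ y\in F\}$ with $x\cdot y=\sum_i x_iy_i$. *)

From HB Require Import structures.
From mathcomp Require Import all_boot all_order all_algebra all_field.
Set Implicit Arguments. Unset Strict Implicit. Unset Printing Implicit Defensive.
Import Order.TTheory GRing.Theory Num.Theory.
Local Open Scope ring_scope.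

(* Vectors of F_q^d are row vectors 'rV[K]_d; we work with d = n.+1. *)

Definition dotF (K : finFieldType) (d : nat) (x y : 'rV[K]_d) : K :=
  \sum_(i < d) x 0 i * y 0 i.

(* Paraboloid in F_q^(n+1): x_1^2 + ... + x_n^2 = x_(n+1)
   (the first n coordinates are i < n, the last one is ord_max). *)
Definition paraboloid (K : finFieldType) (n : nat) : {set 'rV[K]_n.+1} :=
  [set x : 'rV[K]_n.+1 |
     \sum_(i < n) x 0 (widen_ord (leqnSn n) i) ^+ 2 == x 0 ord_max].

Definition dotset (K : finFieldType) (d : nat) (E F : {set 'rV[K]_d}) : {set K} :=
  [set dotF x y | x in E, y in F].

(* For x in F_q^d and t in F_q let m(x, t) be the number of y in F with x . y = t,
   and W(x) = \sum_t (q m(x, t) - |F|)^2 its dispersion.  Expanding the square,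
   \sum_(x in G) W(x) only involves pairs y <> y' of F; if G is invariant under
   translation along a vector v with v . (y - y') = 1, the hyperplanes
   x . (y - y') = c cut G into q pieces of equal size, and the sum equals
   |G| (q^2 - q) |F|.  Two distinct points of the paraboloid P differ in one of
   their first d - 1 coordinates, say the i-th, so v can be taken a multiple of
   e_i; this applies to G = F_q^d and to the hyperplane x_d = 0.  Points of P
   off that hyperplane have pairwise distinct nonzero multiples and W is
   invariant under scaling, whence
   \sum_(x in P) W(x) <= 2 q^(d+1) |F|.  By Cauchy-Schwarz,
   \sum_t (\sum_(x in E) (q m(x, t) - |F|))^2 <= |E| \sum_(x in P) W(x), and
   every t outside Pi(E, F) contributes (|E| |F|)^2, so
   (q - |Pi(E, F)|) |E| |F| <= 2 q^(d+1).  With |E| |F| >= 4 q^d this gives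
   |Pi(E, F)| >= q / 2, whatever the characteristic and already for d = 1. *)

From HB Require Import structures.
From mathcomp Require Import all_boot all_order all_algebra all_field ring lra.
Import Order.TTheory GRing.Theory Num.Theory.
Local Open Scope ring_scope.
Set Implicit Arguments. Unset Strict Implicit. Unset Printing Implicit Defensive.

Section DotProduct.
Variables (K : finFieldType) (d : nat).
Implicit Types (x y w : 'rV[K]_d) (k : K).

Lemma dotFDl x y w : dotF (x + y) w = dotF x w + dotF y w.
Proof. by rewrite /dotF -big_split; apply: eq_bigr => i _; rewrite !mxE mulrDl. Qed.

Lemma dotFZl k x w : dotF (k *: x) w = k * dotF x w.
Proof. by rewrite /dotF mulr_sumr; apply: eq_bigr => i _; rewrite !mxE mulrA. Qed.

Lemma dotFBr x y y' : dotF x (y - y') = dotF x y - dotF x y'.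
Proof. by rewrite /dotF -sumrB; apply: eq_bigr => i _; rewrite !mxE mulrBr. Qed.

Lemma dotF_delta_mxl j w : dotF (delta_mx 0 j) w = w 0 j.
Proof.
rewrite /dotF (bigD1 j) //= mxE !eqxx mul1r big1 ?addr0 // => i ne.
by rewrite mxE eqxx (negbTE ne) mul0r.
Qed.

Lemma dotF_delta_mxr w j : dotF w (delta_mx 0 j) = w 0 j.
Proof.
rewrite /dotF (bigD1 j) //= mxE !eqxx mulr1 big1 ?addr0 // => i ne.
by rewrite mxE eqxx (negbTE ne) mulr0.
Qed.

End DotProduct.

Section RealSums.
Variable R : realFieldType.

Lemma sum_indicator_eq (T : finType) (A : {pred T}) (a : T) :
  \sum_(t in A) ((a == t)%:R : R) = (a \in A)%:R.
Proof.
have [aA|naA] := boolP (a \in A).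
  rewrite (bigD1 a) //= eqxx big1 ?addr0 // => t /andP[_].
  by rewrite eq_sym => /negbTE ->.
by rewrite big1 // => t tA; case: eqP => // at_; rewrite at_ tA in naA.
Qed.

Lemma ler_sum_subset (T : finType) (A B : {set T}) (f : T -> R) :
  A \subset B -> (forall x, 0 <= f x) ->
  \sum_(x in A) f x <= \sum_(x in B) f x.
Proof.
move=> AB f_ge0; rewrite [leRHS](big_setID A) /= (setIidPr AB) lerDl.
exact: sumr_ge0.
Qed.

Lemma sqr_sum_le (T : finType) (A : {pred T}) (a : T -> R) :
  (\sum_(i in A) a i) ^+ 2 <= #|A|%:R * \sum_(i in A) a i ^+ 2.
Proof.
set s := \sum_(i in A) a i; set s2 := \sum_(i in A) a i ^+ 2.
have : 0 <= \sum_(i in A) \sum_(j in A) (a i - a j) ^+ 2.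
  by apply: sumr_ge0 => i _; apply: sumr_ge0 => j _; apply: sqr_ge0.
suff -> : \sum_(i in A) \sum_(j in A) (a i - a j) ^+ 2 = 2 * (#|A|%:R * s2 - s ^+ 2).
  by rewrite pmulr_rge0 // subr_ge0.
transitivity (\sum_(i in A) (#|A|%:R * a i ^+ 2 - 2 * a i * s + s2)).
  apply: eq_bigr => i _.
  have sqrB j : (a i - a j) ^+ 2 = a i ^+ 2 - 2 * a i * a j + a j ^+ 2 by ring.
  rewrite (eq_bigr _ (fun j _ => sqrB j)).
  by rewrite big_split sumrB /= sumr_const -mulr_sumr -[_ *+ #|A|]mulr_natl.
rewrite big_split sumrB /= -mulr_suml -!mulr_sumr sumr_const -/s -/s2 -mulr_natl.
by rewrite expr2; ring.
Qed.

End RealSums.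

Section Dispersion.
Variables (K : finFieldType) (d : nat) (R : realFieldType).
Implicit Types (G F : {set 'rV[K]_d}) (x y v w : 'rV[K]_d).
Local Notation q := (#|K|%:R : R).

Definition translation_stable G v : Prop :=
  forall x k, x \in G -> x + k *: v \in G.

Definition separating_translations G F : Prop :=
  forall y y', y \in F -> y' \in F -> y != y' ->
    exists2 v, dotF v (y - y') = 1 & translation_stable G v.

(* Translation by [c *: v] maps the level set [x . w = 0] of [G] onto the level
   set [x . w = c]. *)
Lemma sum_dot_level G v w c :
  dotF v w = 1 -> translation_stable G v ->
  \sum_(x in G) ((dotF x w == c)%:R : R) = \sum_(x in G) (dotF x w == 0)%:R.
Proof.
move=> vw1 Gv; rewrite (reindex_inj (h := fun x => x + c *: v)); last exact: addIr.
apply: eq_big => x /=.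
  apply/idP/idP => [/(Gv _ (- c))|/(Gv _ c)] //.
  by rewrite -addrA -scalerDl addrN scale0r addr0.
by rewrite dotFDl dotFZl vw1 mulr1 -subr_eq0 addrK.
Qed.

Lemma card_dot_level G v w :
  dotF v w = 1 -> translation_stable G v ->
  q * \sum_(x in G) (dotF x w == 0)%:R = #|G|%:R.
Proof.
move=> vw1 Gv.
transitivity (\sum_(c : K) \sum_(x in G) ((dotF x w == c)%:R : R)).
  by rewrite mulr_natl -sumr_const; apply: eq_bigr => c _; rewrite (sum_dot_level c vw1 Gv).
rewrite exchange_big /= -sum1_card natr_sum; apply: eq_bigr => x _.
by rewrite sum_indicator_eq.
Qed.

Definition dot_count F x t : R := \sum_(y in F) (dotF x y == t)%:R.

Definition dot_dispersion F x : R :=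
  \sum_(t : K) (q * dot_count F x t - #|F|%:R) ^+ 2.

Lemma dot_dispersion_ge0 F x : 0 <= dot_dispersion F x.
Proof. by apply: sumr_ge0 => t _; apply: sqr_ge0. Qed.

Lemma sum_dot_count F x : \sum_(t : K) dot_count F x t = #|F|%:R.
Proof.
rewrite /dot_count exchange_big /= -sum1_card natr_sum; apply: eq_bigr => y _.
by rewrite sum_indicator_eq.
Qed.

Lemma sum_dot_count_sqr F x :
  \sum_(t : K) dot_count F x t ^+ 2 =
  \sum_(y in F) \sum_(y' in F) (dotF x y == dotF x y')%:R.
Proof.
rewrite /dot_count; under eq_bigr do rewrite expr2 mulr_suml.
rewrite exchange_big /=; apply: eq_bigr => y _.
under eq_bigr do rewrite mulr_sumr.
rewrite exchange_big /=; apply: eq_bigr => y' _.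
rewrite (bigD1 (dotF x y)) //= eqxx mul1r big1 ?addr0 1?eq_sym // => t /negbTE.
by rewrite eq_sym => ->; rewrite mul0r.
Qed.

Lemma dot_dispersionE F x :
  dot_dispersion F x =
  q ^+ 2 * \sum_(y in F) \sum_(y' in F) (dotF x y == dotF x y')%:R - q * #|F|%:R ^+ 2.
Proof.
rewrite -sum_dot_count_sqr /dot_dispersion.
transitivity (\sum_(t : K) (q ^+ 2 * dot_count F x t ^+ 2)
              - \sum_(t : K) (2 * q * #|F|%:R * dot_count F x t)
              + \sum_(t : K) (#|F|%:R ^+ 2 : R)).
  by rewrite -sumrB -big_split /=; apply: eq_bigr => t _; ring.
by rewrite -!mulr_sumr sum_dot_count sumr_const -[_ *+ #|K|]mulr_natl; ring.
Qed.

Lemma sum_dot_coincidence G y y' :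
  (y != y' -> exists2 v, dotF v (y - y') = 1 & translation_stable G v) ->
  q * \sum_(x in G) (dotF x y == dotF x y')%:R =
  #|G|%:R + (q - 1) * #|G|%:R * (y == y')%:R.
Proof.
have [<- _|neq [//|v vyy' Gv]] := eqVneq y y'.
  rewrite mulr1 (eq_bigr (fun _ => 1)) => [|x _]; last by rewrite eqxx.
  by rewrite sumr_const -mulr_natr; ring.
rewrite mulr0 addr0 -(card_dot_level vyy' Gv); congr (_ * _).
by apply: eq_bigr => x _; rewrite dotFBr subr_eq0.
Qed.

Lemma sum_dot_dispersion G F :
  separating_translations G F ->
  \sum_(x in G) dot_dispersion F x = #|G|%:R * (q ^+ 2 - q) * #|F|%:R.
Proof.
move=> sepGF.
have pairs : q * \sum_(y in F) \sum_(y' in F) \sum_(x in G) (dotF x y == dotF x y')%:R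
             = #|G|%:R * #|F|%:R ^+ 2 + (q - 1) * #|G|%:R * #|F|%:R.
  rewrite mulr_sumr.
  transitivity (\sum_(y in F) (#|G|%:R * #|F|%:R + (q - 1) * #|G|%:R)).
    apply: eq_bigr => y yF; rewrite mulr_sumr.
    rewrite (eq_bigr _ (fun y' y'F => sum_dot_coincidence (sepGF y y' yF y'F))).
    by rewrite big_split /= sumr_const -mulr_sumr sum_indicator_eq yF mulr1; ring.
  by rewrite big_split /= !sumr_const; ring.
under eq_bigr do rewrite dot_dispersionE.
rewrite sumrB -mulr_sumr sumr_const exchange_big /=.
under eq_bigr do rewrite exchange_big /=.
by rewrite (expr2 q) -mulrA pairs; ring.
Qed.

Lemma dot_countZ F l x t : l != 0 -> dot_count F (l *: x) t = dot_count F x (t / l).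
Proof.
move=> l0; apply: eq_bigr => y _; rewrite dotFZl.
by rewrite -{1}(divfK l0 t) [_ / l * l]mulrC (inj_eq (mulfI l0)).
Qed.

Lemma dot_dispersionZ F l x : l != 0 -> dot_dispersion F (l *: x) = dot_dispersion F x.
Proof.
move=> l0; rewrite /dot_dispersion; under eq_bigr do rewrite dot_countZ //.
by rewrite [RHS](reindex_inj (h := fun t => t / l)) //; apply: mulIf; rewrite invr_eq0.
Qed.

End Dispersion.

Section Paraboloid.
Variables (K : finFieldType) (n : nat) (R : realFieldType).
Implicit Types (F : {set 'rV[K]_n.+1}) (x y : 'rV[K]_n.+1).
Local Notation q := (#|K|%:R : R).
Local Notation P := (paraboloid K n).
Local Notation lift_coord i := (widen_ord (leqnSn n) i).

Definition hyperplane_last0 : {set 'rV[K]_n.+1} := [set x : 'rV_n.+1 | x 0 ord_max == 0].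
Local Notation H := hyperplane_last0.

(* A point of the paraboloid is determined by its first [n] coordinates. *)
Lemma paraboloid_coord_neq y y' :
  y \in P -> y' \in P -> y != y' ->
  exists i : 'I_n, y 0 (lift_coord i) != y' 0 (lift_coord i).
Proof.
rewrite !inE => /eqP yP /eqP y'P neq; apply/existsP; apply: contraR neq.
rewrite negb_exists => /forallP same.
have {}same (i : 'I_n) : y 0 (lift_coord i) = y' 0 (lift_coord i).
  exact/eqP/negPn/same.
apply/eqP/rowP => j; have [->|j_max] := eqVneq j ord_max.
  by rewrite -yP -y'P; apply: eq_bigr => i _; rewrite same.
have jn : (j < n)%N.
  rewrite ltn_neqAle -ltnS ltn_ord andbT; apply: contra j_max => /eqP j_n.
  exact/eqP/val_inj.
have -> : j = lift_coord (Ordinal jn) by apply: val_inj.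
exact: same.
Qed.

Lemma paraboloid_separating_direction y y' :
  y \in P -> y' \in P -> y != y' ->
  exists2 v : 'rV[K]_n.+1, dotF v (y - y') = 1 & v 0 ord_max = 0.
Proof.
move=> yP y'P neq; have [i yi] := paraboloid_coord_neq yP y'P neq.
have yi' : (y - y') 0 (lift_coord i) != 0 by rewrite !mxE subr_eq0.
exists (((y - y') 0 (lift_coord i))^-1 *: delta_mx 0 (lift_coord i)).
  by rewrite dotFZl dotF_delta_mxl mulVf.
rewrite !mxE eqxx /= mulr_natr mulrb ifF //; apply/negbTE.
by apply/eqP => /(congr1 val) /= ni; have := ltn_ord i; rewrite -ni ltnn.
Qed.

Lemma separating_translations_setT F :
  F \subset P -> separating_translations [set: 'rV[K]_n.+1] F.
Proof.
move=> /subsetP FP y y' yF y'F neq.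
have [v vyy' _] := paraboloid_separating_direction (FP _ yF) (FP _ y'F) neq.
by exists v => // x k _; rewrite inE.
Qed.

Lemma separating_translations_hyperplane F :
  F \subset P -> separating_translations H F.
Proof.
move=> /subsetP FP y y' yF y'F neq.
have [v vyy' v0] := paraboloid_separating_direction (FP _ yF) (FP _ y'F) neq.
by exists v => // x k; rewrite !inE !mxE v0 mulr0 addr0.
Qed.

Lemma card_hyperplane_last0 : #|H|%:R * q = q ^+ n.+1.
Proof.
set e := delta_mx 0 ord_max : 'rV[K]_n.+1.
have ee : dotF e e = 1 by rewrite dotF_delta_mxl mxE !eqxx.
have stable : translation_stable [set: 'rV[K]_n.+1] e by move=> x k _; rewrite inE.
have cardT : #|[set: 'rV[K]_n.+1]| = (#|K| ^ n.+1)%N by rewrite cardsT card_mx mul1n.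
rewrite -natrX -cardT -(card_dot_level R ee stable) mulrC.
congr (_ * _); rewrite -sum1_card natr_sum [LHS]big_mkcond [RHS]big_mkcond /=.
apply: eq_bigr => x _.
by rewrite !inE dotF_delta_mxr; case: eqP.
Qed.

(* Scaling by [l] multiplies the last coordinate by [l] but the paraboloid equation
   by [l ^+ 2], so [l] is recovered from [l *: x] when [x] is off [H]. *)
Lemma scale_paraboloid_inj :
  {in setX [set~ 0] (P :\: H) &, injective (fun p : K * 'rV[K]_n.+1 => p.1 *: p.2)}.
Proof.
move=> [l x] [l' x']; rewrite !inE /=.
move=> /and3P[l0 xH /eqP xP] /and3P[l'0 x'H /eqP x'P] eq_lx.
have eq_coord j : l * x 0 j = l' * x' 0 j.
  by have := congr1 (fun M : 'rV_n.+1 => M 0 j) eq_lx; rewrite !mxE.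
have eq_last : l ^+ 2 * x 0 ord_max = l' ^+ 2 * x' 0 ord_max.
  by rewrite -xP -x'P !mulr_sumr; apply: eq_bigr => i _; rewrite -!exprMn eq_coord.
have ll' : l = l'.
  apply: (@mulIf _ (l' * x' 0 ord_max)); first by rewrite mulf_neq0.
  transitivity (l ^+ 2 * x 0 ord_max); first by rewrite -eq_coord mulrA -expr2.
  by rewrite eq_last mulrA -expr2.
by move: eq_lx; rewrite /= -ll' => /(scalerI l0) ->.
Qed.

Section ParaboloidSums.
Variable F : {set 'rV[K]_n.+1}.
Local Notation W := (dot_dispersion R F).

Lemma sum_dispersion_off_hyperplane :
  (q - 1) * \sum_(x in P :\: H) W x <= \sum_(x in [set: 'rV[K]_n.+1]) W x.
Proof.
have scaled : \sum_(l in [set~ (0 : K)]) \sum_(x in P :\: H) W (l *: x) =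
              (q - 1) * \sum_(x in P :\: H) W x.
  transitivity (\sum_(l in [set~ (0 : K)]) \sum_(x in P :\: H) W x).
    apply: eq_bigr => l; rewrite !inE => l0.
    by apply: eq_bigr => x _; rewrite dot_dispersionZ.
  rewrite sumr_const cardsC1 -[_ *+ #|K|.-1]mulr_natl -subn1 natrB //.
  by rewrite ltnW // card_finNzRing_gt1.
rewrite -scaled pair_big /=.
rewrite (eq_bigl (fun p => p \in setX [set~ (0 : K)] (P :\: H))) => [|[l x]]; last first.
  by rewrite in_setX.
rewrite -(big_imset W scale_paraboloid_inj) /=.
by apply: ler_sum_subset (subsetT _) _ => x; apply: dot_dispersion_ge0.
Qed.

Hypothesis FP : F \subset P.

Lemma sum_dispersion_paraboloid : \sum_(x in P) W x <= 2 * q ^+ n.+2 * #|F|%:R.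
Proof.
have q1 : 1 < q by rewrite ltr1n card_finNzRing_gt1.
have W_ge0 := dot_dispersion_ge0 R F.
have off_H : \sum_(x in P :\: H) W x <= q ^+ n.+2 * #|F|%:R.
  rewrite -(ler_pM2l (_ : 0 < q - 1)) ?subr_gt0 //.
  apply: le_trans sum_dispersion_off_hyperplane _.
  rewrite (sum_dot_dispersion R (separating_translations_setT FP)) cardsT card_mx mul1n.
  rewrite natrX [leLHS](_ : _ = (q - 1) * (q ^+ n.+2 * #|F|%:R)) //.
  by rewrite !exprS; ring.
have on_H : \sum_(x in P :&: H) W x <= q ^+ n.+2 * #|F|%:R.
  apply: le_trans (ler_sum_subset (subsetIr P H) W_ge0) _.
  rewrite (sum_dot_dispersion R (separating_translations_hyperplane FP)).
  have -> : #|H|%:R * (q ^+ 2 - q) * #|F|%:R = q ^+ n.+1 * (q - 1) * #|F|%:R.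
    by rewrite -card_hyperplane_last0; ring.
  rewrite [q ^+ n.+2]exprSr; apply: ler_wpM2r => //.
  by apply: ler_wpM2l; [exact: exprn_ge0 | rewrite gerBl].
rewrite (big_setID H) /= addrC -mulrA mulr_natl mulr2n.
exact: lerD.
Qed.
End ParaboloidSums.

End Paraboloid.

Section ProductSet.
Variables (K : finFieldType) (n : nat) (R : realFieldType).
Variables (E F : {set 'rV[K]_n.+1}).
Hypotheses (EP : E \subset paraboloid K n) (FP : F \subset paraboloid K n).
Local Notation q := (#|K|%:R : R).

Lemma dot_count_notin_dotset x t :
  x \in E -> t \notin dotset E F -> dot_count R F x t = 0.
Proof.
move=> xE tPi; apply: big1 => y yF; case: eqP => // xyt.
by case/negP: tPi; rewrite -xyt; apply/imset2P; exists x y.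
Qed.

(* Cauchy-Schwarz bounds [\sum_t D t ^+ 2] by [#|E|] times the dispersion summed
   over the paraboloid, while every [t] outside [dotset E F] has [D t = - #|E| #|F|]. *)
Lemma card_dotset_compl_le :
  #|~: dotset E F|%:R * (#|E|%:R * #|F|%:R) ^+ 2 <= 2 * q ^+ n.+2 * (#|E|%:R * #|F|%:R).
Proof.
pose D t := \sum_(x in E) (q * dot_count R F x t - #|F|%:R).
have upper : \sum_(t : K) D t ^+ 2 <= #|E|%:R * (2 * q ^+ n.+2 * #|F|%:R).
  apply: le_trans (_ : \sum_(t : K) #|E|%:R *
                       \sum_(x in E) (q * dot_count R F x t - #|F|%:R) ^+ 2 <= _).
    by apply: ler_sum => t _; apply: sqr_sum_le.
  rewrite -mulr_sumr ler_wpM2l // exchange_big /=.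
  apply: le_trans (sum_dispersion_paraboloid R FP).
  exact: ler_sum_subset EP (dot_dispersion_ge0 R F).
have D_out t : t \in ~: dotset E F -> D t = - (#|E|%:R * #|F|%:R).
  rewrite inE => tPi; rewrite /D (eq_bigr (fun _ => - #|F|%:R)) => [|x xE].
    by rewrite sumr_const mulNrn -[_ *+ #|E|]mulr_natl.
  by rewrite dot_count_notin_dotset // mulr0 sub0r.
have lower : #|~: dotset E F|%:R * (#|E|%:R * #|F|%:R) ^+ 2 <= \sum_(t : K) D t ^+ 2.
  rewrite [leRHS](bigID (mem (~: dotset E F))) /= -[leLHS]addr0 lerD //; last first.
    by apply: sumr_ge0 => t _; apply: sqr_ge0.
  rewrite mulr_natl -sumr_const.
  by under [leRHS]eq_bigr => t tPi do rewrite D_out // sqrrN.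
by apply: le_trans lower (le_trans upper _); rewrite mulrCA.
Qed.

Lemma card_dotset_ge_half :
  4 * q ^+ n.+1 <= #|E|%:R * #|F|%:R -> q / 2 <= #|dotset E F|%:R.
Proof.
set N := #|E|%:R * #|F|%:R; set k : R := #|~: dotset E F|%:R => large.
have Q_gt0 : 0 < q ^+ n.+1 by rewrite exprn_gt0 // ltr0n ltnW // card_finNzRing_gt1.
have N_gt0 : 0 < N by apply: lt_le_trans large; rewrite mulr_gt0.
have kN : k * N <= 2 * q * q ^+ n.+1.
  rewrite -(ler_pM2r N_gt0) -[leLHS]mulrA -expr2 (le_trans card_dotset_compl_le) //.
  by rewrite -/N exprS [2 * _]mulrA.
have k_le : k * 4 <= 2 * q.
  rewrite -(ler_pM2r Q_gt0) -mulrA.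
  exact: le_trans (ler_wpM2l (ler0n _ _) large) kN.
have : #|dotset E F|%:R + k = q by rewrite -natrD cardsC.
lra.
Qed.
End ProductSet.

Theorem theorem3p6 (n : nat) : (1 <= n)%N ->
  exists C c : rat, 1 < C /\ 0 < c < 1 /\
    forall (K : finFieldType) (E F : {set 'rV[K]_n.+1}),
      2%N \notin [pchar K] ->
      E \subset paraboloid K n -> F \subset paraboloid K n ->
      C * ((#|K| ^ n.+1)%N)%:R <= ((#|E| * #|F|)%N)%:R ->
      c * (#|K|)%:R <= (#|dotset E F|)%:R.
Proof.
move=> _; exists 4, (1 / 2); split; first by []; split; first by [].
move=> K E F _ EP FP large; rewrite mul1r mulrC.
by rewrite natrX natrM in large; apply: card_dotset_ge_half EP FP large.
Qed.
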